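(* Let $F$ be a number field and $R$ an order in $F$. Let $G$ be a finite group, $H$ a finite subgroup of $\mathcal{V}(RG)$, and $x\in RG$. (i) The shifted bicyclic maps $\psi_{H,x}$ and $\psi_{x,H}$ are injective group morphisms $H\to\mathcal{U}(RG)$. (ii) The subgroups $H$, $\psi_{H,x}(H)$ and $\psi_{x,H}(H)$ are conjugate in $\mathcal{U}(FG)$. (iii) If moreover $H\le G$ and $g\in G$, then $\psi_{H,g}$ and $\psi_{g^{-1},H}$ restrict to the identity on $H\cap H^g$, and $\psi_{H,g}(H)\cap\psi_{g^{-1},H}(H)=H\cap H^g$.
   Context: $\mathcal{V}(RG)$ is the group of units of $RG$ of augmentation $1$. For a finite subgroup $H$ put $\widetilde{H}=\sum_{h\in H}h$. The shifted bicyclic maps are $\psi_{H,x}:H\to\mathcal{U}(RG)$, $h\mapsto h+\widetilde{H}x(1-h)$, and $\psi_{x,H}:H\to\mathcal{U}(RG)$, $h\mapsto h+(1-h)x\widetilde{H}$. $H^g=g^{-1}Hg$. *)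

From HB Require Import structures.
From mathcomp Require Import all_boot all_order all_algebra all_fingroup all_field.
Set Implicit Arguments. Unset Strict Implicit. Unset Printing Implicit Defensive.
Import GRing.Theory.
Local Open Scope ring_scope.

Section GroupAlgebra.
Variables (F : fieldType) (gT : finGroupType).

Definition galg : predArgType := {ffun gT -> F}.
HB.instance Definition _ := GRing.Zmodule.on galg.

Definition galg_mul (a b : galg) : galg :=
  [ffun g => \sum_(h : gT) a h * b (h^-1 * g)%g].
Definition galg_one : galg := [ffun g => (g == 1%g)%:R].

Lemma galg_mulA : associative galg_mul.
Proof.
move=> a b c; apply/ffunP=> g; rewrite !ffunE; symmetry.
under eq_bigr do rewrite ffunE big_distrl /=.
rewrite exchange_big /=; apply: eq_bigr => h _.
rewrite ffunE big_distrr /= (reindex_inj (mulgI h)) /=.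
by apply: eq_bigr => m _; rewrite mulKg mulrA invMg mulgA.
Qed.

Lemma galg_mul1 : left_id galg_one galg_mul.
Proof.
move=> a; apply/ffunP=> g; rewrite !ffunE (bigD1 1%g) //= big1.
  by rewrite ffunE eqxx mul1r invg1 mul1g addr0.
by move=> h /negbTE nh; rewrite ffunE nh mul0r.
Qed.

Lemma galg_mul1r : right_id galg_one galg_mul.
Proof.
move=> a; apply/ffunP=> g; rewrite !ffunE (bigD1 g) //= big1.
  by rewrite ffunE mulVg eqxx mulr1 addr0.
move=> h nh; rewrite ffunE -eq_mulVg1 (negbTE nh) mulr0 //.
Qed.

Lemma galg_mulDl : left_distributive galg_mul +%R.
Proof.
move=> a b c; apply/ffunP=> g; rewrite !ffunE -big_split /=.
by apply: eq_bigr => h _; rewrite ffunE mulrDl.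
Qed.

Lemma galg_mulDr : right_distributive galg_mul +%R.
Proof.
move=> a b c; apply/ffunP=> g; rewrite !ffunE -big_split /=.
by apply: eq_bigr => h _; rewrite ffunE mulrDr.
Qed.

Lemma galg_one_neq0 : galg_one != 0.
Proof.
apply/eqP => /ffunP /(_ 1%g); rewrite !ffunE eqxx => /eqP.
by rewrite oner_eq0.
Qed.

HB.instance Definition _ := GRing.Zmodule_isNzRing.Build galg
  galg_mulA galg_mul1 galg_mul1r galg_mulDl galg_mulDr galg_one_neq0.

End GroupAlgebra.

Section GroupAlgebraNotions.
Variables (F : fieldType) (gT : finGroupType).
Local Notation FG := (galg F gT).

Definition gelt (g : gT) : FG := [ffun k => (k == g)%:R].

Definition augm (u : FG) : F := \sum_(g : gT) u g.

(* R G, for a subring R of F, as the subset of F G with coefficients in R *)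
Definition in_galg (R : pred F) : pred FG := fun u : FG => [forall g, u g \in R].

Definition unit_in (S : pred FG) (u : FG) : Prop :=
  u \in S /\ exists2 v, v \in S & u * v = 1 /\ v * u = 1.

Definition V_galg (R : pred F) (u : FG) : Prop :=
  unit_in (in_galg R) u /\ augm u = 1.

(* H (given as a duplicate-free list) is a finite subgroup of the group of
   elements satisfying P *)
Definition is_finite_subgroup (P : FG -> Prop) (H : seq FG) : Prop :=
  [/\ uniq H, {in H, forall h, P h}, 1 \in H,
      {in H &, forall h k, h * k \in H} &
      {in H, forall h, exists2 k, k \in H & h * k = 1 /\ k * h = 1}].

Definition tilde (H : seq FG) : FG := \sum_(h <- H) h.

Definition psiHx (H : seq FG) (x : FG) (h : FG) : FG := h + tilde H * x * (1 - h).
Definition psixH (x : FG) (H : seq FG) (h : FG) : FG := h + (1 - h) * x * tilde H.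

(* B = A^u = u^-1 A u for some u satisfying P (v is the inverse of u) *)
Definition conjugate_in (P : FG -> Prop) (A B : seq FG) : Prop :=
  exists u v, [/\ P u, u * v = 1, v * u = 1 & B =i [seq v * a * u | a <- A]].

End GroupAlgebraNotions.

(* R is an order of the number field F: a subring of F which is a finitely
   generated Z-module spanning F over Q. *)
Definition is_order (F : fieldExtType rat) (R : pred F) : Prop :=
  [/\ 1 \in R, {in R &, forall x y, x - y \in R},
      {in R &, forall x y, x * y \in R} &
      exists s : seq F,
        (forall x, x \in R <-> exists c : 'I_(size s) -> int,
                                 x = \sum_(i < size s) s`_i *~ c i)
        /\ (<<s>>%VS = fullv)].

(* Let t be the sum of the elements of H.  Then h t = t h = t for h in H and
   t^2 = |H| t; these identities make psi_{H,x} multiplicative, and psi_{x,H}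
   is the same map in the opposite ring.  If psi_{H,x}(u) = 1 then f = 1 - u
   equals t x f, so u f = f and u^n = 1 - n f; as the powers of u repeat and
   the characteristic is 0, f = 0, whence injectivity.  With e = t/|H| the
   element b = t x (1 - e) has square 0 and psi_{H,x}(h) = (1 - b) h (1 + b),
   which gives the conjugacy.  Finally t psi_{x',H}(h) = t while
   t psi_{H,x}(h) = t + |H| t x (1 - h), so a common value of the two maps is
   a fixed point h of psi_{H,x}; for x = g and H <= G, comparing the
   coefficients of t g = t g h shows that this means h \in H^g. *)

From HB Require Import structures.
From mathcomp Require Import all_boot all_order all_algebra all_fingroup all_field.
Set Implicit Arguments. Unset Strict Implicit. Unset Printing Implicit Defensive.
Import GRing.Theory.
Local Open Scope ring_scope.

Definition bicyclic (A : nzRingType) (t x h : A) : A := h + t * x * (1 - h).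

Lemma bicyclic1 (A : nzRingType) (t x : A) : bicyclic t x 1 = 1.
Proof. by rewrite /bicyclic subrr mulr0 addr0. Qed.

Section SubringClosed.
Variables (A : nzRingType) (S : pred A).
Hypothesis S_sub : subring_closed S.

Lemma subring_closed0 : 0 \in S.
Proof. by case: S_sub => S1 SB _; rewrite -(subrr 1) SB. Qed.

Lemma subring_closed_add : {in S &, forall a b, a + b \in S}.
Proof.
case: S_sub => _ SB _ a b aS bS; have {}SB : {in S &, forall a b, a - b \in S} := SB.
by rewrite -[b]opprK -[- b]sub0r !SB ?subring_closed0.
Qed.

Lemma subring_closed_sum (I : Type) (r : seq I) (P : pred I) (f : I -> A) :
  (forall i, P i -> f i \in S) -> \sum_(i <- r | P i) f i \in S.
Proof.
move=> fS; apply: (big_ind (fun a => a \in S)) => //.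
  exact: subring_closed0.
exact: subring_closed_add.
Qed.

Lemma subring_closed_bicyclic t x h :
  t \in S -> x \in S -> h \in S -> bicyclic t x h \in S.
Proof.
case: S_sub => S1 SB SM tS xS hS.
by apply: subring_closed_add => //; apply: (SM); [apply: (SM) | apply: (SB)].
Qed.

End SubringClosed.

Lemma subring_closed_conv (A : nzRingType) (S : pred A) :
  subring_closed S -> @subring_closed A^c S.
Proof. by move=> [S1 SB SM]; split=> // a b aS bS; apply: (SM). Qed.

Definition unit_group_seq (A : nzRingType) (H : seq A) : Prop :=
  [/\ uniq H, 1 \in H, {in H &, forall h k, h * k \in H} &
      {in H, forall h, exists2 k, k \in H & h * k = 1 /\ k * h = 1}].

Lemma unit_group_seq_conv (A : nzRingType) (H : seq A) :
  unit_group_seq H -> @unit_group_seq A^c H.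
Proof.
case=> uH H1 HM Hinv; split=> // [h k hH kH | h /Hinv[k kH [hk kh]]].
  exact: HM.
by exists k.
Qed.

Section UnitGroup.
Variables (A : nzRingType) (H : seq A).
Hypothesis HG : unit_group_seq H.
Local Notation t := (\sum_(h <- H) h).

Lemma unit_group_perm (f : A -> A) :
  injective f -> {in H, forall h, f h \in H} -> perm_eq [seq f h | h <- H] H.
Proof.
move=> f_inj fH; have [uH _ _ _] := HG.
have ufH : uniq [seq f h | h <- H] by rewrite map_inj_uniq.
have fHH : {subset [seq f h | h <- H] <= H} by move=> _ /mapP[h hH ->]; apply: fH.
have [_ eqfH] := uniq_min_size ufH fHH (eq_leq (esym (size_map f H))).
exact: uniq_perm.
Qed.

Lemma mul_sum_group_l m : m \in H -> m * t = t.
Proof.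
move=> mH; have [_ _ HM /(_ m mH)[k _ [_ km]]] := HG.
rewrite mulr_sumr -(big_map (fun h => m * h) xpredT id).
apply/perm_big/unit_group_perm => [a b /(congr1 (fun y => k * y))|h hH].
  by rewrite !mulrA km !mul1r.
exact: HM.
Qed.

Lemma mul_sum_group_r m : m \in H -> t * m = t.
Proof.
move=> mH; have [_ _ HM /(_ m mH)[k _ [mk _]]] := HG.
rewrite mulr_suml -(big_map (fun h => h * m) xpredT id).
apply/perm_big/unit_group_perm => [a b /(congr1 (fun y => y * k))|h hH].
  by rewrite -!mulrA mk !mulr1.
exact: HM.
Qed.

Lemma sum_group_sqr : t * t = t *+ size H.
Proof.
rewrite [X in X * _]big_seq mulr_suml (eq_bigr (fun=> t *+ 1)) => [|h hH].
  by rewrite sumrMnr -big_seq sum1_size.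
by rewrite mulr1n mul_sum_group_l.
Qed.

Lemma unit_group_exp u : u \in H -> forall n, u ^+ n \in H.
Proof. by have [_ H1 HM _] := HG; move=> uH; elim=> [|n IHn]; rewrite ?exprS ?HM. Qed.

Lemma unit_group_exp_collide u : u \in H ->
  exists i j, (i < j)%N /\ u ^+ i = u ^+ j.
Proof.
move=> uH; have [uniqH _ _ _] := HG.
pose s := [seq u ^+ n | n <- iota 0 (size H).+1].
have /(uniqPn 1)[i [j [ltij ltj]]] : ~~ uniq s.
  apply: contraL (leqnn (size H)) => us; rewrite -ltnNge.
  have sH : {subset s <= H} by move=> _ /mapP[n _ ->]; apply: unit_group_exp.
  by have := uniq_leq_size us sH; rewrite size_map size_iota.
have lti := ltn_trans ltij ltj; rewrite size_map size_iota in lti ltj.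
rewrite /s !(nth_map 0%N) ?size_iota // !nth_iota // !add0n => Eij.
by exists i, j.
Qed.

Lemma group_morph_inj (B : nzRingType) (f : A -> B) :
  {in H &, {morph f : a b / a * b}} -> f 1 = 1 ->
  {in H, forall h, f h = 1 -> h = 1} -> {in H &, injective f}.
Proof.
move=> fM f1 f_ker h k hH kH fhk; have [_ _ HM /(_ k kH)[k' k'H [kk' k'k]]] := HG.
have hk'1 : h * k' = 1 by apply: f_ker; rewrite ?HM // fM // fhk -fM // kk'.
by rewrite -[h]mulr1 -k'k mulrA hk'1 mul1r.
Qed.

Section Bicyclic.
Variable x : A.
Local Notation psi := (bicyclic t x).

Lemma bicyclicM h k : h \in H -> psi (h * k) = psi h * psi k.
Proof.
move=> hH; rewrite /bicyclic; set a := t * x.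
have ha : h * a = a by rewrite /a mulrA mul_sum_group_l.
have h'a : (1 - h) * a = 0 by rewrite mulrBl mul1r ha subrr.
have E1 : h * (k + a * (1 - k)) = h * k + a * (1 - k) by rewrite mulrDr mulrA ha.
have E2 : a * (1 - h) * (k + a * (1 - k)) = a * ((1 - h) * k).
  by rewrite -mulrA mulrDr mulrA h'a mul0r addr0.
by rewrite mulrDl E1 E2 -addrA -mulrDr mulrBl mul1r addrA subrK.
Qed.

Lemma bicyclic_mul_sum h : h \in H -> psi h * t = t.
Proof.
move=> hH; rewrite /bicyclic mulrDl mul_sum_group_l // -mulrA mulrBl mul1r.
by rewrite mul_sum_group_l // subrr mulr0 addr0.
Qed.

Lemma sum_mul_bicyclic h : h \in H -> t * psi h = t + t * x * (1 - h) *+ size H.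
Proof.
by move=> hH; rewrite /bicyclic mulrDr mul_sum_group_r // !mulrA sum_group_sqr !mulrnAl.
Qed.

Section RationalAlgebra.
Hypothesis natr_inv : forall n, (0 < n)%N -> exists c : A, c *+ n = 1.

Lemma mulrn_eq0_Qalg (z : A) n : (0 < n)%N -> z *+ n = 0 -> z = 0.
Proof.
move=> /natr_inv[c cn] zn.
by rewrite -[z]mulr1 -cn mulrnAr -mulrnAl zn mul0r.
Qed.

Lemma unit_group_unipotent u : u \in H -> u * (1 - u) = 1 - u -> u = 1.
Proof.
move=> uH; set f := 1 - u => uf.
have uE : u = 1 - f by rewrite /f opprB addrC subrK.
clearbody f.
have uX n : u ^+ n = 1 - f *+ n.
  elim: n => [|n IHn]; first by rewrite expr0 subr0.
  by rewrite exprS IHn mulrBr mulr1 mulrnAr uf {1}uE mulrS opprD addrA.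
have [i [j [ltij]]] := unit_group_exp_collide uH.
rewrite !uX => /addrI/oppr_inj fij.
have : f *+ (j - i) = 0.
  by apply: (@addrI _ (f *+ i)); rewrite -mulrnDr subnKC ?(ltnW ltij) // -fij addr0.
by move/mulrn_eq0_Qalg; rewrite subn_gt0 ltij uE => /(_ isT) ->; rewrite subr0.
Qed.

Lemma bicyclic_eq1 u : u \in H -> psi u = 1 -> u = 1.
Proof.
move=> uH psiu1; apply: unit_group_unipotent => //.
have a1u : t * x * (1 - u) = 1 - u by rewrite -[in RHS]psiu1 /bicyclic [u + _]addrC addrK.
by rewrite -[in LHS]a1u !mulrA mul_sum_group_l.
Qed.

Lemma sum_mul_bicyclic_fix h : h \in H -> t * psi h = t -> psi h = h.
Proof.
have [_ H1 _ _] := HG; move=> hH.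
rewrite sum_mul_bicyclic // -[X in _ = X]addr0 => /addrI/mulrn_eq0_Qalg a1h.
by rewrite /bicyclic a1h ?addr0 //; case: (H) H1.
Qed.

Lemma bicyclic_conj :
  exists p q, [/\ p * q = 1, q * p = 1 & {in H, forall h, psi h = p * h * q}].
Proof.
have [_ H1 _ _] := HG; have [c cn] : exists c : A, c *+ size H = 1.
  by apply: natr_inv; case: (H) H1.
set e := c * t; set b := t * x * (1 - e).
have eh h : h \in H -> e * h = e by move=> hH; rewrite /e -mulrA mul_sum_group_r.
have et : e * t = t by rewrite /e -mulrA sum_group_sqr mulrnAr -mulrnAl cn mul1r.
have e't : (1 - e) * t = 0 by rewrite mulrBl mul1r et subrr.
have bb : b * b = 0.
  by rewrite /b !mulrA -[t * x * (1 - e) * t]mulrA e't !(mulr0, mul0r).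
have hb h : h \in H -> h * b = b by move=> hH; rewrite /b !mulrA mul_sum_group_l.
have b1h h : h \in H -> b * (1 - h) = t * x * (1 - h).
  by move=> hH; rewrite /b -mulrA mulrBl mul1r [e * _]mulrBr mulr1 eh // subrr subr0.
exists (1 - b), (1 + b); split=> [||h hH].
- by rewrite mulrBl mul1r mulrDr mulr1 bb addr0 addrK.
- by rewrite mulrDl mul1r mulrBr mulr1 bb subr0 subrK.
rewrite mulrDr mulr1 -mulrA hb // !mulrBl !mul1r bb subr0.
by rewrite /bicyclic -b1h // mulrBr mulr1 addrA addrAC.
Qed.

End RationalAlgebra.
End Bicyclic.

End UnitGroup.

Section GroupAlgebra.
Variables (F : fieldType) (gT : finGroupType).
Local Notation FG := (galg F gT).

Lemma galg_natr_inv : [pchar F] =i pred0 ->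
  forall n, (0 < n)%N -> exists c : FG, c *+ n = 1.
Proof.
move=> /pcharf0P F0 n n0; exists [ffun g => (1 : FG) g / n%:R]; apply/ffunP => g.
by rewrite ffunMnE ffunE -[_ *+ n]mulr_natr divfK // F0 -lt0n.
Qed.

Lemma subring_closed_in_galg (R : pred F) :
  subring_closed R -> subring_closed (in_galg R : pred FG).
Proof.
move=> R_sub; have [R1 RB RM] := R_sub.
split=> [|u v /forallP uR /forallP vR|u v /forallP uR /forallP vR];
  apply/forallP => g.
- by rewrite ffunE; case: eqP => _; rewrite ?subring_closed0.
- by rewrite !ffunE; apply: (RB).
- by rewrite ffunE; apply: subring_closed_sum => // h _; apply: (RM).
Qed.

Lemma unit_group_seq_finite_subgroup (P : FG -> Prop) (H : seq FG) :
  is_finite_subgroup P H -> unit_group_seq H.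
Proof. by case. Qed.

Lemma psiHxE (H : seq FG) x h : psiHx H x h = bicyclic (tilde H) x h.
Proof. by []. Qed.

Lemma psixHE (H : seq FG) x h : psixH x H h = @bicyclic FG^c (tilde H) x h.
Proof. by rewrite /psixH -mulrA. Qed.

Lemma psixHM (H : seq FG) x h k : unit_group_seq H -> k \in H ->
  psixH x H (h * k) = psixH x H h * psixH x H k.
Proof.
move=> /unit_group_seq_conv HG kH; rewrite !psixHE.
exact: (bicyclicM HG x h kH).
Qed.

Lemma psixH1 (H : seq FG) x : psixH x H 1 = 1.
Proof. by rewrite psixHE bicyclic1. Qed.

Lemma psixH_eq1 (H : seq FG) x : [pchar F] =i pred0 -> unit_group_seq H ->
  {in H, forall h, psixH x H h = 1 -> h = 1}.
Proof.
move=> F0 /unit_group_seq_conv HG h; rewrite psixHE.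
exact: (bicyclic_eq1 HG (galg_natr_inv F0)).
Qed.

Lemma psixH_in (S : pred FG) (H : seq FG) x h : subring_closed S ->
  tilde H \in S -> x \in S -> h \in S -> psixH x H h \in S.
Proof.
move=> /subring_closed_conv S_sub; rewrite psixHE.
exact: (subring_closed_bicyclic S_sub).
Qed.

Lemma psixH_conj (H : seq FG) x : [pchar F] =i pred0 -> unit_group_seq H ->
  exists p q, [/\ p * q = 1, q * p = 1 & {in H, forall h, psixH x H h = p * h * q}].
Proof.
move=> F0 /unit_group_seq_conv HG.
have [p [q [pq qp psiE]]] := bicyclic_conj HG x (galg_natr_inv F0).
by exists q, p; split=> // h hH; rewrite psixHE psiE //; apply: mulrA.
Qed.

Lemma unit_in_group_morph (S : pred FG) (H : seq FG) (f : FG -> FG) :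
  unit_group_seq H -> {in H &, {morph f : a b / a * b}} -> f 1 = 1 ->
  {in H, forall h, f h \in S} -> {in H, forall h, unit_in S (f h)}.
Proof.
move=> [_ _ _ Hinv] fM f1 fS h hH; have [k kH [hk kh]] := Hinv h hH.
by split; [|exists (f k)]; rewrite -?fM ?hk ?kh ?f1 ?fS.
Qed.

Lemma conjugate_in_map (A : seq FG) (f : FG -> FG) p q :
  p * q = 1 -> q * p = 1 -> {in A, forall a, f a = p * a * q} ->
  conjugate_in (unit_in predT) A [seq f a | a <- A].
Proof.
move=> pq qp /eq_in_map fE; exists q, p; split=> //; first by split=> //; exists p.
by move=> y; rewrite fE.
Qed.

Lemma conjugate_in_maps (A : seq FG) (f f' : FG -> FG) p q p' q' :
  p * q = 1 -> q * p = 1 -> {in A, forall a, f a = p * a * q} ->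
  p' * q' = 1 -> q' * p' = 1 -> {in A, forall a, f' a = p' * a * q'} ->
  conjugate_in (unit_in predT) [seq f a | a <- A] [seq f' a | a <- A].
Proof.
move=> pq qp fE pq' qp' fE'.
have qq'1 : (p * q') * (p' * q) = 1 by rewrite mulrA -(mulrA p) qp' mulr1.
have q'q1 : (p' * q) * (p * q') = 1 by rewrite mulrA -(mulrA p') qp mulr1.
exists (p * q'), (p' * q); split=> //; first by split=> //; exists (p' * q).
move=> y; rewrite -map_comp; congr (y \in _); apply/eq_in_map => a aA /=.
by rewrite fE // fE' // !mulrA -[p' * q * p]mulrA qp mulr1 -[p' * a * q * p]mulrA qp mulr1.
Qed.

Lemma psiHx_psixH_meet (H : seq FG) x x' h h' :
  [pchar F] =i pred0 -> unit_group_seq H -> h \in H -> h' \in H ->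
  psiHx H x h = psixH x' H h' -> psiHx H x h = h.
Proof.
move=> F0 HG hH h'H E; rewrite psiHxE.
apply: (sum_mul_bicyclic_fix HG (galg_natr_inv F0) hH).
rewrite -psiHxE E psixHE.
exact: (bicyclic_mul_sum (unit_group_seq_conv HG) x' h'H).
Qed.

Lemma geltM (a b : gT) : gelt F a * gelt F b = gelt F (a * b)%g.
Proof.
apply/ffunP => p; rewrite !ffunE (bigD1 a) //= big1 => [|h /negbTE nh]; last first.
  by rewrite ffunE nh mul0r.
rewrite !ffunE eqxx mul1r addr0; congr (nat_of_bool _)%:R.
by apply/eqP/eqP => [<-|->]; rewrite ?mulKVg ?mulKg.
Qed.

Lemma gelt_inj : injective (gelt F (gT:=gT)).
Proof.
move=> a b /ffunP /(_ a); rewrite !ffunE eqxx.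
by case: eqP => // _ /eqP; rewrite oner_eq0.
Qed.

Lemma sum_gelt_mul_geltE (K : {set gT}) (a p : gT) :
  ((\sum_(k in K) gelt F k) * gelt F a) p = (p * a^-1 \in K)%g%:R.
Proof.
rewrite mulr_suml sum_ffunE.
rewrite (eq_bigr (fun k => (k == p * a^-1)%g%:R)) => [|k _]; last first.
  by rewrite geltM ffunE; congr (nat_of_bool _)%:R; apply/eqP/eqP => ->; rewrite ?mulgK ?mulgKV.
have [pK | pNK] := boolP (p * a^-1 \in K)%g.
  by rewrite (bigD1 (p * a^-1)%g) //= eqxx big1 ?addr0 // => k /andP[_ /negbTE ->].
by rewrite big1 // => k kK; case: eqP kK => // ->; rewrite (negbTE pNK).
Qed.

Section GroupBasis.
Variables (K : {group gT}) (H : seq FG).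
Hypotheses (HK : H =i [seq gelt F k | k <- enum K]) (HG : unit_group_seq H).

Lemma gelt_in k : k \in K -> gelt F k \in H.
Proof. by move=> kK; rewrite HK map_f // mem_enum. Qed.

Lemma tilde_gelt : tilde H = \sum_(k in K) gelt F k.
Proof.
have [uH _ _ _] := HG.
have uK : uniq [seq gelt F k | k <- enum K] by rewrite map_inj_uniq ?enum_uniq //; apply: gelt_inj.
by rewrite /tilde (perm_big _ (uniq_perm uH uK HK)) big_map big_enum.
Qed.

Lemma psiHx_gelt_fixed g k :
  (psiHx H (gelt F g) (gelt F k) == gelt F k) = (k \in K :^ g)%g.
Proof.
rewrite /psiHx -subr_eq0 addrAC subrr add0r mulrBr mulr1 subr_eq0 -mulrA geltM.
rewrite mem_conjg conjgE invgK mulgA.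
apply/eqP/idP => [/ffunP/(_ (g * k)%g) | gkgK].
  rewrite tilde_gelt !sum_gelt_mul_geltE mulgV group1.
  by case: (_ \in K) => // /eqP; rewrite eq_sym oner_eq0.
by rewrite -[(g * k)%g](mulgKV g) -geltM mulrA /tilde (mul_sum_group_r HG (gelt_in gkgK)).
Qed.

Lemma psixH_gelt_fixed g k :
  k \in (K :^ g)%g -> psixH (gelt F (g^-1)%g) H (gelt F k) = gelt F k.
Proof.
rewrite mem_conjg conjgE invgK mulgA => gkgK.
rewrite /psixH mulrBl mul1r geltM -[(k * g^-1)%g](mulKg g) [(g * (k * _))%g]mulgA -geltM.
by rewrite mulrBl -mulrA /tilde (mul_sum_group_l HG (gelt_in gkgK)) subrr addr0.
Qed.

Lemma psi_images_meet_gelt g y : [pchar F] =i pred0 ->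
  (y \in [seq psiHx H (gelt F g) h | h <- H]) &&
  (y \in [seq psixH (gelt F (g^-1)%g) H h | h <- H])
  = (y \in [seq gelt F k | k <- enum (K :&: K :^ g)%g]).
Proof.
move=> F0; apply/andP/mapP => [[/mapP[h hH ->] /mapP[h' h'H E]] | [k]].
  have fix_h := psiHx_psixH_meet F0 HG hH h'H E.
  move: hH fix_h; rewrite HK => /mapP[k kK ->] fix_k; exists k => //.
  by rewrite mem_enum in kK; rewrite mem_enum inE kK -psiHx_gelt_fixed fix_k eqxx.
rewrite mem_enum => /setIP[kK kKg] ->; split; apply/mapP; exists (gelt F k).
- exact: gelt_in.
- by apply/esym/eqP; rewrite psiHx_gelt_fixed.
- exact: gelt_in.
- by rewrite psixH_gelt_fixed.
Qed.

End GroupBasis.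
End GroupAlgebra.

Theorem proposition6p2 (F : fieldExtType rat) (R : pred F) (gT : finGroupType)
    (H : seq (galg F gT)) (x : galg F gT) :
  is_order R ->
  is_finite_subgroup (V_galg R) H ->
  x \in in_galg R ->
  [/\ (* (i) *)
      [/\ {in H &, forall h k, psiHx H x (h * k) = psiHx H x h * psiHx H x k},
          {in H &, injective (psiHx H x)} &
          {in H, forall h, unit_in (in_galg R) (psiHx H x h)}],
      [/\ {in H &, forall h k, psixH x H (h * k) = psixH x H h * psixH x H k},
          {in H &, injective (psixH x H)} &
          {in H, forall h, unit_in (in_galg R) (psixH x H h)}],
      (* (ii) *)
      [/\ conjugate_in (unit_in predT) H [seq psiHx H x h | h <- H],
          conjugate_in (unit_in predT) H [seq psixH x H h | h <- H] &
          conjugate_in (unit_in predT) [seq psiHx H x h | h <- H]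
                                       [seq psixH x H h | h <- H]] &
      (* (iii) *)
      forall (K : {group gT}), H =i [seq gelt F k | k <- enum K] ->
      forall g : gT,
        {in (K :&: K :^ g)%g, forall k,
           psiHx H (gelt F g) (gelt F k) = gelt F k /\
           psixH (gelt F (g^-1)%g) H (gelt F k) = gelt F k} /\
        (forall y : galg F gT,
           (y \in [seq psiHx H (gelt F g) h | h <- H]) &&
           (y \in [seq psixH (gelt F (g^-1)%g) H h | h <- H])
           = (y \in [seq gelt F k | k <- enum ((K :&: K :^ g)%g)]))].
Proof.
case=> R1 RB RM _ HS xR.
have HG := unit_group_seq_finite_subgroup HS.
have F0 : [pchar F] =i pred0 by move=> p; rewrite pchar_lalg Num.Theory.pchar_num.
have Qalg := galg_natr_inv gT F0.
have RG_sub := subring_closed_in_galg gT (And3 R1 RB RM : subring_closed R).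
have HR : {in H, forall h, h \in in_galg R} by case: HS => _ HV _ _ _ h /HV[[]].
have tR : tilde H \in in_galg R by rewrite /tilde big_seq subring_closed_sum.
have psiM : {in H &, {morph psiHx H x : h k / h * k}}.
  by move=> h k hH _; apply: bicyclicM.
have psixM : {in H &, {morph psixH x H : h k / h * k}}.
  by move=> h k _ kH; apply: psixHM.
have [p [q [pq qp psiE]]] := bicyclic_conj HG x Qalg.
have [p' [q' [pq' qp' psixE]]] := psixH_conj x F0 HG.
split.
- split=> //.
    exact: group_morph_inj psiM (bicyclic1 _ _) (bicyclic_eq1 HG Qalg).
  apply: unit_in_group_morph psiM (bicyclic1 _ _) _ => // h hH.
  exact: subring_closed_bicyclic (HR h hH).
- split=> //; first exact: group_morph_inj psixM (@psixH1 _ _ H x) (psixH_eq1 F0 HG).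
  apply: unit_in_group_morph psixM (@psixH1 _ _ H x) _ => // h hH.
  exact: psixH_in (HR h hH).
- split; first exact: conjugate_in_map psiE.
    exact: conjugate_in_map psixE.
  exact: conjugate_in_maps psiE _ _ psixE.
move=> K HK g; split=> [k /setIP[kK kKg] | y]; last exact: psi_images_meet_gelt HK HG g y F0.
by split; [apply/eqP; rewrite (psiHx_gelt_fixed HK HG) | apply: (psixH_gelt_fixed HK HG)].
Qed.
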